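(* Let $d\ge 1$, $e=2^d$, and let $a=a_1\cdots a_{d+e}\in\{0,1\}^{d+e}$ satisfy $\overline{a_1\cdots a_d}=a_{e+1}\cdots a_{e+d}$ (bitwise complement). Let $k$ be the number of indices $z\in\{d,\dots,e\}$ with $a_z=0$. Write $\lambda_d$ as the concatenation of the $2^e$ blocks $M_dw_0,\dots,M_dw_{2^e-1}$, each of length $e$. Then the number of pairs $(n,z)$ with $n$ even, $0\le n\le 2^e-2$, $d\le z\le e$, such that $a$ occurs in $\lambda_d$ starting at position $e-z+1$ of the block $M_dw_n$ (so that $a_1\cdots a_z$ is the suffix of length $z$ of $M_dw_n$ and $a_{z+1}\cdots a_{d+e}$ is the prefix of length $d+e-z$ of $M_dw_{n+1}$) is exactly $k$.
   Context: Over $\mathbb{F}_2$, $M_0=(1)$ and $M_{d+1}=\begin{pmatrix} M_d & M_d\\ 0 & M_d\end{pmatrix}$, so $M_d$ is $e\times e$ with $e=2^d$. $w_0,\dots,w_{2^e-1}$ are all vectors of $\mathbb{F}_2^e$ in increasing lexicographic order ($w_n$ is the $e$-bit binary representation of $n$, most significant bit first). Binary words and vectors are identified. $\lambda_d=(M_dw_0)(M_dw_1)\cdots(M_dw_{2^e-1})$. For a binary word $u$, $\overline{u}$ denotes its bitwise complement. *)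

From HB Require Import structures.
From mathcomp Require Import all_boot all_order all_algebra.
Set Implicit Arguments. Unset Strict Implicit. Unset Printing Implicit Defensive.
Import GRing.Theory.

(* Entries of M_d, following the recursive block definition
   M_0 = (1), M_{d+1} = [[M_d, M_d], [0, M_d]]  (0-based indices). *)
Fixpoint Mentry (d i j : nat) : bool :=
  match d with
  | 0 => (i == 0%N) && (j == 0%N)
  | d'.+1 =>
      let h := (2 ^ d')%N in
      if i < h then (if j < h then Mentry d' i j else Mentry d' i (j - h))
      else (if j < h then false else Mentry d' (i - h) (j - h))
  end.

Definition Mmat (d : nat) : 'M['F_2]_(2 ^ d) :=
  \matrix_(i < 2 ^ d, j < 2 ^ d) (Mentry d i j)%:R%R.

(* w_n : the e-bit binary representation of n, most significant bit first,
   as a column vector (entry i, 0-based, is bit e-1-i of n). *)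
Definition wvec (e n : nat) : 'cV['F_2]_e :=
  \col_(i < e) (odd (n %/ 2 ^ (e - i.+1)))%:R%R.

Definition block (d n : nat) : seq 'F_2 :=
  let v := (Mmat d *m wvec (2 ^ d) n)%R in
  [seq v i ord0 | i <- enum 'I_(2 ^ d)].

Definition lambda (d : nat) : seq 'F_2 :=
  flatten [seq block d n | n <- iota 0 (2 ^ (2 ^ d))].

(* a (word of length d+e) occurs in lambda_d starting at (1-based) position
   e - z + 1 of block n, i.e. at 0-based global index n*e + (e - z). *)
Definition occurs_at (d : nat) (a : seq 'F_2) (n z : nat) : bool :=
  take (d + 2 ^ d) (drop (n * 2 ^ d + (2 ^ d - z)) (lambda d)) == a.

(* 1. M_d is upper unitriangular, its last row is (0 ... 0 1) and its last
      column is all ones.  Hence n |-> M_d w_n is a bijection from [0, 2^e)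
      onto F_2^e, the last bit of M_d w_n is the parity of n, and for n even
      (w_{n+1} = w_n + e_last) the block M_d w_{n+1} is the complement of
      M_d w_n.
   2. Fix z in [d, e].  For n even, a occurs at position e-z+1 of block n iff
      a = (suffix of length z of B) ++ (prefix of length d+e-z of ~B) with
      B = M_d w_n; by the complement hypothesis on a this holds iff
      B = ~(a_{z+1}..a_e) ++ a_1..a_z.  So exactly one n (even or odd) fits,
      and it is even iff the last letter a_z of that block is 0.
   3. Summing over z in [d, e] gives the theorem. *)
From mathcomp Require Import all_boot all_order all_algebra zify.
Import GRing.Theory.

Lemma Mentry_below_diag d i j : j < i -> i < 2 ^ d -> Mentry d i j = false.
Proof.
elim: d i j => [|d IH] i j /=; first by rewrite expn0; case: i.
rewrite expnS mul2n -addnn => ji iB.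
case: ifP => ih; case: ifP => jh; [exact: IH | lia | by [] | apply: IH; lia].
Qed.

Lemma Mentry_diag d i : i < 2 ^ d -> Mentry d i i.
Proof.
elim: d i => [|d IH] i /=; first by rewrite expn0; case: i.
rewrite expnS mul2n -addnn => iB.
by case: ifP => ih; rewrite ih; apply: IH; lia.
Qed.

Lemma Mentry_last_col d i : i < 2 ^ d -> Mentry d i (2 ^ d).-1.
Proof.
elim: d i => [|d IH] i /=; first by rewrite expn0; case: i.
have hp : 0 < 2 ^ d by rewrite expn_gt0.
rewrite expnS mul2n -addnn => iB.
have -> : (2 ^ d + 2 ^ d).-1 < 2 ^ d = false by lia.
have -> : (2 ^ d + 2 ^ d).-1 - 2 ^ d = (2 ^ d).-1 by lia.
by case: ifP => ih; apply: IH; lia.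
Qed.

Lemma Mentry_last_row d j :
  j < 2 ^ d -> Mentry d (2 ^ d).-1 j = (j == (2 ^ d).-1).
Proof.
elim: d j => [|d IH] j /=; first by rewrite expn0; case: j.
have hp : 0 < 2 ^ d by rewrite expn_gt0.
rewrite expnS mul2n -addnn => jB.
have -> : (2 ^ d + 2 ^ d).-1 < 2 ^ d = false by lia.
have -> : (2 ^ d + 2 ^ d).-1 - 2 ^ d = (2 ^ d).-1 by lia.
case: ifP => jh; first by apply/esym/eqP; lia.
by rewrite IH; [apply/eqP/eqP | ]; lia.
Qed.

Lemma binary_digits_inj e n m : n < 2 ^ e -> m < 2 ^ e ->
  (forall k, k < e -> odd (n %/ 2 ^ k) = odd (m %/ 2 ^ k)) -> n = m.
Proof.
elim: e n m => [|e IH] n m; first by rewrite expn0; case: n; case: m.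
move=> hn hm hk.
rewrite -(odd_double_half n) -(odd_double_half m).
have h0 := hk 0 isT; rewrite !expn0 !divn1 in h0.
rewrite h0; congr (_ + _.*2); apply: IH.
- by rewrite -divn2 ltn_divLR // -expnSr.
- by rewrite -divn2 ltn_divLR // -expnSr.
- by move=> k hke; have := hk k.+1 hke; rewrite expnS !divnMA !divn2.
Qed.

Local Open Scope ring_scope.

Lemma F2_add1K (x : 'F_2) : x + 1 + 1 = x.
Proof. by rewrite -addrA (_ : 1 + 1 = 0 :> 'F_2) ?addr0 //; apply: val_inj. Qed.

Lemma F2_of_bool_inj (b c : bool) : ((b : nat)%:R : 'F_2) = (c : nat)%:R -> b = c.
Proof. by case: b; case: c. Qed.

Definition complement (s : seq 'F_2) : seq 'F_2 := map (fun x => x + 1) s.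

Lemma complementK : involutive complement.
Proof.
by move=> s; rewrite /complement -map_comp map_id_in // => x _ /=; rewrite F2_add1K.
Qed.

Lemma complement_cat s t : complement (s ++ t) = complement s ++ complement t.
Proof. exact: map_cat. Qed.

Lemma straddle_window (d e z : nat) (a B : seq 'F_2) :
  size a = (d + e)%N -> size B = e -> (d <= z <= e)%N ->
  (forall i, (i < d)%N -> nth 0 a (e + i) = nth 0 a i + 1) ->
  (a == drop (e - z) B ++ take (d + e - z) (complement B)) =
  (B == complement (take (e - z) (drop z a)) ++ take z a).
Proof.
move=> ha hB /andP [hdz hze] hcompl; apply/eqP/eqP => [->|->].
  rewrite takel_cat ?size_drop ?hB; last lia.
  rewrite (take_oversize (s := drop (e - z) B)); last by rewrite size_drop hB; lia.
  rewrite drop_size_cat; last by rewrite size_drop hB; lia.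
  rewrite take_takel; last lia.
  by rewrite -map_take complementK cat_take_drop.
have hsuffix : drop e a = complement (take d a).
  apply: (@eq_from_nth _ 0); first by rewrite size_drop size_map size_takel ha; lia.
  move=> i; rewrite size_drop ha => hi.
  rewrite nth_drop (nth_map 0) ?size_takel ?ha ?nth_take; try lia.
  by apply: hcompl; lia.
have hP : size (complement (take (e - z) (drop z a))) = (e - z)%N.
  by rewrite size_map size_takel // size_drop ha; lia.
rewrite drop_size_cat // complement_cat complementK take_cat.
rewrite size_takel ?size_drop ?ha ?ifF; try lia.
have -> : (d + e - z - (e - z) = d)%N by lia.
rewrite catA -takeD (_ : (z + (e - z) = e)%N); last lia.
by rewrite -[take d _]map_take take_takel // -[map _ _]/(complement _) -hsuffix cat_take_drop.
Qed.

Section Blocks.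
Variable d : nat.
Local Notation e := (2 ^ d)%N.

Lemma e_gt0 : (0 < e)%N. Proof. by rewrite expn_gt0. Qed.

Lemma last_index_lt : (e.-1 < e)%N. Proof. by rewrite ltn_predL e_gt0. Qed.
Definition lastI : 'I_e := Ordinal last_index_lt.

Definition Mw (n : nat) : 'cV['F_2]_e := Mmat d *m wvec e n.

Lemma Mmat_unit : Mmat d \in unitmx.
Proof.
rewrite unitmxE -det_tr det_trig.
  by rewrite big1 ?unitr1 // => i _; rewrite !mxE Mentry_diag.
apply/forallP => i; apply/forallP => j; apply/implyP => ij.
by rewrite !mxE Mentry_below_diag.
Qed.

Lemma wvec_inj n m : (n < 2 ^ e)%N -> (m < 2 ^ e)%N -> wvec e n = wvec e m -> n = m.
Proof.
move=> hn hm hw; apply: binary_digits_inj hn hm _ => k hk.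
have hj : (e - k.+1 < e)%N by lia.
have := congr1 (fun v : 'cV['F_2]_e => v (Ordinal hj) ord0) hw; rewrite !mxE /=.
have -> : (e - (e - k.+1).+1 = k)%N by lia.
exact: F2_of_bool_inj.
Qed.

Lemma Mw_inj n m : (n < 2 ^ e)%N -> (m < 2 ^ e)%N -> Mw n = Mw m -> n = m.
Proof.
move=> hn hm hMw; apply: wvec_inj => //.
by rewrite -(mulKmx Mmat_unit (wvec e n)) -(mulKmx Mmat_unit (wvec e m)) -/(Mw n) hMw.
Qed.

(* Every vector of F_2^e is a block: an injection between sets of size 2^e. *)
Lemma Mw_surj (v : 'cV['F_2]_e) : exists2 n, (n < 2 ^ e)%N & Mw n = v.
Proof.
pose G (n : 'I_(2 ^ e)) := Mw n.
have G_inj : injective G by move=> x y /Mw_inj h; apply/val_inj/h.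
have := @inj_card_onto _ _ G G_inj.
rewrite card_mx card_Fp // card_ord muln1 leqnn => /(_ isT v) /codomP [x ->].
by exists x.
Qed.

(* Since the last row of M_d is the last unit vector, the last letter of
   M_d w_n is the last bit of n. *)
Lemma Mw_last n : Mw n lastI ord0 = (odd n)%:R.
Proof.
rewrite mxE (bigD1 lastI) //= big1 ?addr0.
  rewrite !mxE Mentry_last_row ?eqxx ?mul1r ?ltn_predL ?e_gt0 //=.
  by rewrite prednK ?subnn ?expn0 ?divn1 // e_gt0.
move=> j hj; rewrite !mxE Mentry_last_row //.
by rewrite (_ : (j == e.-1 :> nat) = false) ?mul0r //; apply/negbTE.
Qed.

Lemma wvec_succ_even n (j : 'I_e) : ~~ odd n ->
  wvec e n.+1 j ord0 = wvec e n j ord0 + (j == lastI)%:R.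
Proof.
move=> hn; rewrite !mxE.
case: (eqVneq j lastI) => [->|hj] /=.
  have -> : (e - e.-1.+1 = 0)%N by rewrite prednK ?subnn // e_gt0.
  by rewrite !expn0 !divn1 /= (negbTE hn) add0r.
have hk : (0 < e - j.+1)%N.
  have : (j : nat) != e.-1 by [].
  by have := ltn_ord j; lia.
rewrite addr0 -(prednK hk) expnS !divnMA; congr (odd _)%:R; congr (_ %/ _)%N; lia.
Qed.

(* For n even, M_d w_{n+1} = M_d w_n + (last column of M_d) = ~(M_d w_n). *)
Lemma Mw_succ_even n (i : 'I_e) : ~~ odd n -> Mw n.+1 i ord0 = Mw n i ord0 + 1.
Proof.
move=> hn; rewrite !mxE.
under eq_bigr => j _ do rewrite wvec_succ_even // mulrDr.
rewrite big_split /=; congr (_ + _).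
rewrite (bigD1 lastI) //= big1 ?addr0.
  by rewrite eqxx mulr1 mxE Mentry_last_col.
by move=> j /negbTE ->; rewrite mulr0.
Qed.

Lemma nth_block n (i : 'I_e) : nth 0 (block d n) i = Mw n i ord0.
Proof.
rewrite /block (nth_map i) ?size_enum_ord //; congr (Mw n _ _).
by apply: val_inj; rewrite /= nth_enum_ord.
Qed.

Lemma size_block n : size (block d n) = e.
Proof. by rewrite size_map size_enum_ord. Qed.

Lemma block_succ_even n : ~~ odd n -> block d n.+1 = complement (block d n).
Proof.
by move=> hn; rewrite /complement /block /= -map_comp; apply: eq_map => i /=; rewrite -Mw_succ_even.
Qed.

Lemma block_last n : nth 0 (block d n) e.-1 = (odd n)%:R.
Proof. by rewrite (nth_block n lastI) Mw_last. Qed.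

Lemma block_inj n m :
  (n < 2 ^ e)%N -> (m < 2 ^ e)%N -> block d n = block d m -> n = m.
Proof.
move=> hn hm hb; apply: Mw_inj => //; apply/matrixP => i j.
by rewrite (ord1 j) -!nth_block hb.
Qed.

Lemma block_surj B : size B = e -> exists2 n, (n < 2 ^ e)%N & block d n = B.
Proof.
move=> hB; have [n hn hMw] := Mw_surj (\col_i nth 0 B i).
exists n => //; apply: (@eq_from_nth _ 0); rewrite size_block ?hB // => i hi.
by rewrite (nth_block n (Ordinal hi)) hMw mxE.
Qed.

Lemma size_lambda_prefix n :
  size (flatten [seq block d m | m <- iota 0 n]) = (n * e)%N.
Proof.
elim: n => [|n IH] //.
rewrite -[n.+1]addn1 iotaD map_cat flatten_cat size_cat IH /= cats0 size_block.
by rewrite mulnDl mul1n.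
Qed.

(* Since z >= d >= 1, an occurrence at position e-z+1 of block n starts
   inside block n and ends inside block n+1. *)
Lemma occurs_at_blocks a n z :
  (0 < d)%N -> (n.+1 < 2 ^ e)%N -> (d <= z <= e)%N ->
  occurs_at d a n z =
  (a == drop (e - z) (block d n) ++ take (d + e - z) (block d n.+1)).
Proof.
move=> hd hn /andP [hdz hze].
rewrite /occurs_at /lambda (_ : 2 ^ e = n + (2 ^ e - n.+2).+2)%N; last lia.
rewrite iotaD add0n map_cat flatten_cat /=.
rewrite [(n * e + _)%N]addnC -drop_drop drop_size_cat ?size_lambda_prefix //.
rewrite drop_cat size_block ifT; last lia.
rewrite take_cat size_drop size_block ifF; last lia.
rewrite (_ : d + e - (e - (e - z)) = d + e - z)%N; last lia.
by rewrite takel_cat ?size_block 1?eq_sym //; lia.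
Qed.

End Blocks.

Lemma sum_indicator_single (N n0 : nat) (P Q : pred nat) :
  (forall n, (n < N)%N -> P n -> Q n = (n == n0)) ->
  (\sum_(0 <= n < N | P n) Q n = ((n0 < N) && P n0 : nat))%N.
Proof.
move=> hQ; rewrite big_mkcond /=.
have [hn0 | hNn0] := ltnP n0 N; last first.
  rewrite big1_seq // => n; rewrite mem_index_iota => /andP [_ hn].
  case: ifP => // /(hQ n hn) ->.
  by rewrite (_ : (n == n0) = false) //; apply/negbTE; lia.
have n0_in : n0 \in index_iota 0 N by rewrite mem_index_iota.
rewrite (bigD1_seq n0) ?iota_uniq //= big1_seq ?addn0 => [|n /andP [hn]].
  by case: ifP => // /(hQ n0 hn0) ->; rewrite eqxx.
rewrite mem_index_iota => /andP [_ /hQ hQn].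
by case: ifP => // /hQn ->; rewrite (negbTE hn).
Qed.

Lemma even_below_even (N n : nat) : ~~ odd N -> (n < N)%N ->
  ((n < N.-1) && ~~ odd n)%N = ~~ odd n.
Proof.
move=> hN hn; case hodd: (odd n); rewrite ?andbF //= andbT.
rewrite ltn_neqAle -ltnS prednK ?hn ?andbT; last lia.
by apply: contraNneq hN => hnN; rewrite -(prednK (leq_ltn_trans (leq0n n) hn)) -hnN /= hodd.
Qed.

(* For a fixed z in [d, e], exactly the block B = ~(a_{z+1}..a_e) ++ a_1..a_z
   followed by its complement carries the occurrence; it is an even-indexed
   block iff its last letter a_z is 0. *)
Lemma occurrences_at_fixed_z d (a : seq 'F_2) z : (0 < d)%N ->
  size a = (d + 2 ^ d)%N ->
  (forall i, (i < d)%N -> nth 0 a (2 ^ d + i) = nth 0 a i + 1) ->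
  (d <= z <= 2 ^ d)%N ->
  (\sum_(0 <= n < (2 ^ (2 ^ d)).-1 | ~~ odd n) (occurs_at d a n z : nat))%N
  = (nth 0 a z.-1 == 0 : nat).
Proof.
move=> hd ha hcompl hz.
set B := complement (take (2 ^ d - z) (drop z a)) ++ take z a.
have size_B : size B = (2 ^ d)%N.
  by rewrite size_cat size_map !size_takel ?size_drop ?ha; lia.
have [n0 hn0 block_n0] := @block_surj d B size_B.
have pow_even : ~~ odd (2 ^ (2 ^ d)) by rewrite oddX expn_eq0.
rewrite (@sum_indicator_single _ n0) => [|n hn n_even].
  rewrite (even_below_even _ _ pow_even hn0).
  have last_B : nth 0 B (2 ^ d).-1 = nth 0 a z.-1.
    rewrite nth_cat size_map size_takel ?size_drop ?ha ?ifF ?nth_take; try lia.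
    by congr nth; lia.
  by rewrite -last_B -block_n0 block_last; case: (odd n0).
have hn1 : (n.+1 < 2 ^ (2 ^ d))%N by move: hn; case: (2 ^ 2 ^ d)%N.
rewrite occurs_at_blocks // block_succ_even // straddle_window ?size_block //.
apply/eqP/eqP => [hnB | ->] //; apply: block_inj hn0 _; first exact: ltnW.
by rewrite hnB.
Qed.

Theorem mainTheorem7 (d : nat) (a : seq 'F_2)
  (hd : (1 <= d)%N)
  (ha : size a = (d + 2 ^ d)%N)
  (hcompl : forall i : nat, (i < d)%N ->
     nth 0%R a (2 ^ d + i) = (nth 0%R a i + 1)%R) :
  (\sum_(0 <= n < (2 ^ (2 ^ d)).-1 | ~~ odd n)
     \sum_(d <= z < (2 ^ d).+1) (occurs_at d a n z : nat))%N
  = count (fun z => nth 0%R a z.-1 == 0%R) (iota d ((2 ^ d).+1 - d)).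
Proof.
rewrite exchange_big_nat -sum1_count [RHS]big_mkcond /=.
apply: eq_big_seq => z; rewrite mem_index_iota ltnS => hz.
by rewrite occurrences_at_fixed_z //; case: (_ == _).
Qed.
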